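(* Let $(X,\preceq,T)$ be a complete quasi-total triple, let $x_0\in X$ and set $H_n:=\{x\in X: x\succeq T^n.x_0\}$ for $n\in\mathbb{Z}$. Then $(X,\preceq,\{H_n\})$ is a half-space order. Moreover, if a group $G$ acts dominatingly and effectively by automorphisms on $(X,\preceq,T)$, then it acts unboundedly and by quasi-automorphisms on $(X,\preceq,\{H_n\})$; in particular, the order induced by $\preceq$ on $G$ is a quasi-total order.
   Context: For a poset $(X,\preceq)$, an order-preserving bijection $T$ of $X$ is dominant if for all $a,b\in X$ there is $n\in\mathbb{N}$ with $T^na\succ b$. A quasi-total triple is $(X,\preceq,T)$ with $(X,\preceq)$ a poset and $T$ a dominant order-preserving bijection such that there is $N\in\mathbb{N}$ with: for all $a,b\in X$ there exists $k\in\{0,\dots,N\}$ with $a\preceq T^kb$ or $b\preceq T^ka$. It is complete if $a\preceq Ta$ for all $a$. An action of $G$ on $(X,\preceq,T)$ by automorphisms is an action by order-preserving bijections commuting with $T$; it is dominating if moreover there exist $g\in G$, $x\in X$, $n\in\mathbb{N}$ with $g.x\succeq T^n.x$. A half-space filtration of $X$: subsets $\{H_n\}_{n\in\mathbb{Z}}$ with $H_{n+1}\subsetneq H_n$, $\bigcap H_n=\emptyset$, $\bigcup H_n=X$; height $h(a)=\sup\{n: a\in H_n\}$, $h(a,b)=h(a)-h(b)$. $(X,\preceq,\{H_n\})$ is a half-space order if $(X,\preceq)$ is a poset, $\{H_n\}$ is a half-space filtration and for some $w$, $h(a,b)\geq w\Rightarrow a\succeq b$. A $G$-action is by quasi-automorphisms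 if for some $d$, $|h(ga,gb)-h(a,b)|\leq d$ for all $g,a,b$; unbounded if for some $g,a$, $h(g^na)\to\pm\infty$ as $n\to\pm\infty$. For an effective action, the induced order on $G$ is $g\leq h\Leftrightarrow\forall k\in G\,\forall x:(kg).x\preceq(kh).x$. A quasi-total order is an order on $G$ induced by an effective, unbounded action by quasi-automorphisms on a half-space order. *)

From Stdlib Require Import ZArith Lia.
Open Scope Z_scope.

Section Defs.
Context {X : Type}.

Definition is_poset (le : X -> X -> Prop) : Prop :=
  (forall a, le a a) /\
  (forall a b, le a b -> le b a -> a = b) /\
  (forall a b c, le a b -> le b c -> le a c).

Definition strict (le : X -> X -> Prop) (a b : X) : Prop := le a b /\ a <> b.

Definition bij_with (T Tinv : X -> X) : Prop :=
  (forall x, Tinv (T x) = x) /\ (forall x, T (Tinv x) = x).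

Definition order_preserving (le : X -> X -> Prop) (f : X -> X) : Prop :=
  forall a b, le a b -> le (f a) (f b).

Definition Tz (T Tinv : X -> X) (n : Z) (x : X) : X :=
  match n with
  | Z0 => x
  | Zpos p => Nat.iter (Pos.to_nat p) T x
  | Zneg p => Nat.iter (Pos.to_nat p) Tinv x
  end.

Definition dominant (le : X -> X -> Prop) (T : X -> X) : Prop :=
  forall a b, exists n : nat, strict le b (Nat.iter n T a).

Definition quasi_total_triple (le : X -> X -> Prop) (T Tinv : X -> X) : Prop :=
  is_poset le /\ bij_with T Tinv /\ order_preserving le T /\ dominant le T /\
  exists N : nat, forall a b, exists k : nat, (k <= N)%nat /\
     (le a (Nat.iter k T b) \/ le b (Nat.iter k T a)).

Definition complete_triple (le : X -> X -> Prop) (T : X -> X) : Prop :=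
  forall a, le a (T a).

Definition half_space_filtration (H : Z -> X -> Prop) : Prop :=
  (forall n x, H (n + 1) x -> H n x) /\
  (forall n, exists x, H n x /\ ~ H (n + 1) x) /\
  (forall x, ~ (forall n, H n x)) /\
  (forall x, exists n, H n x).

(* h(a) = m, i.e. m = sup {n | a in H_n} (for a filtration, the sup is
   attained and is the unique m with a in H_m and a notin H_(m+1)) *)
Definition height (H : Z -> X -> Prop) (a : X) (m : Z) : Prop :=
  H m a /\ ~ H (m + 1) a.

Definition half_space_order (le : X -> X -> Prop) (H : Z -> X -> Prop) : Prop :=
  is_poset le /\ half_space_filtration H /\
  exists w : Z, forall a b ma mb, height H a ma -> height H b mb ->
     ma - mb >= w -> le b a.

End Defs.

Definition is_group {G : Type} (mul : G -> G -> G) (one : G) (inv : G -> G) : Prop :=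
  (forall a b c, mul a (mul b c) = mul (mul a b) c) /\
  (forall a, mul one a = a) /\ (forall a, mul a one = a) /\
  (forall a, mul (inv a) a = one) /\ (forall a, mul a (inv a) = one).

Definition is_action {G X : Type} (mul : G -> G -> G) (one : G)
  (act : G -> X -> X) : Prop :=
  (forall x, act one x = x) /\ (forall g h x, act (mul g h) x = act g (act h x)).

Definition effective_action {G X : Type} (one : G) (act : G -> X -> X) : Prop :=
  forall g, (forall x, act g x = x) -> g = one.

Definition action_by_automorphisms {G X : Type} (le : X -> X -> Prop) (T : X -> X)
  (act : G -> X -> X) : Prop :=
  forall g, order_preserving le (act g) /\ (forall x, act g (T x) = T (act g x)).

Definition dominating_action {G X : Type} (le : X -> X -> Prop) (T : X -> X)
  (act : G -> X -> X) : Prop :=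
  exists g x (n : nat), (1 <= n)%nat /\ le (Nat.iter n T x) (act g x).

Definition quasi_automorphism_action {G X : Type} (H : Z -> X -> Prop)
  (act : G -> X -> X) : Prop :=
  exists d : Z, forall g a b ma mb mga mgb,
    height H a ma -> height H b mb ->
    height H (act g a) mga -> height H (act g b) mgb ->
    Z.abs ((mga - mgb) - (ma - mb)) <= d.

Definition gpow {G : Type} (mul : G -> G -> G) (one : G) (inv : G -> G)
  (g : G) (n : Z) : G :=
  match n with
  | Z0 => one
  | Zpos p => Nat.iter (Pos.to_nat p) (mul g) one
  | Zneg p => Nat.iter (Pos.to_nat p) (mul (inv g)) one
  end.

Definition unbounded_action {G X : Type} (mul : G -> G -> G) (one : G) (inv : G -> G)
  (H : Z -> X -> Prop) (act : G -> X -> X) : Prop :=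
  exists g a,
    (forall M, exists N, forall n m, n >= N ->
        height H (act (gpow mul one inv g n) a) m -> m >= M) /\
    (forall M, exists N, forall n m, n <= N ->
        height H (act (gpow mul one inv g n) a) m -> m <= M).

Definition induced_order {G X : Type} (mul : G -> G -> G) (le : X -> X -> Prop)
  (act : G -> X -> X) (g h : G) : Prop :=
  forall k x, le (act (mul k g) x) (act (mul k h) x).

Definition quasi_total_order {G : Type} (mul : G -> G -> G) (one : G) (inv : G -> G)
  (R : G -> G -> Prop) : Prop :=
  exists (Y : Type) (leY : Y -> Y -> Prop) (HY : Z -> Y -> Prop) (actY : G -> Y -> Y),
    half_space_order leY HY /\ is_action mul one actY /\
    effective_action one actY /\ unbounded_action mul one inv HY actY /\
    quasi_automorphism_action HY actY /\
    (forall g h, R g h <-> induced_order mul leY actY g h).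

From Stdlib Require Import ZArith Lia Classical.
Open Scope Z_scope.

(* Completeness and dominance make [n |-> T^n x0] strictly increasing and
   order-reflecting, so the H_n form a strictly decreasing filtration and the
   height h(x) satisfies T^(h x) x0 <= x.  Quasi-totality with constant N gives
   the reverse bound x <= T^(h x + 1 + 2N) x0: x is sandwiched between two
   points of the orbit of x0 at bounded distance.  Hence h is coarsely
   T-equivariant, h(T^k x) = h(x) + k up to C = 1 + 2N.  An automorphism g
   maps the sandwich of x to a sandwich around T^(h x) (g x0), so
   h(g x) - h(x) stays within 2C of h(g x0): g is a quasi-automorphism.
   Finally g.x >= T^n x with n >= 1 propagates along the orbit of x under g
   (and, reversed, under g^-1), so h(g^k x) grows at least like n k. *)

Section Iterates.
Context {X : Type} (T Tinv : X -> X).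

Lemma Tz_of_nat (k : nat) x : Tz T Tinv (Z.of_nat k) x = Nat.iter k T x.
Proof. destruct k; [reflexivity|]. simpl. now rewrite SuccNat2Pos.id_succ. Qed.

Lemma Tz_opp_of_nat (k : nat) x : Tz T Tinv (- Z.of_nat k) x = Nat.iter k Tinv x.
Proof. destruct k; [reflexivity|]. simpl. now rewrite SuccNat2Pos.id_succ. Qed.

Hypothesis hbij : bij_with T Tinv.

Lemma Tz_succ n x : Tz T Tinv (n + 1) x = T (Tz T Tinv n x).
Proof.
  destruct (Z_le_gt_dec 0 n).
  - replace n with (Z.of_nat (Z.to_nat n)) by lia.
    replace (Z.of_nat (Z.to_nat n) + 1) with (Z.of_nat (S (Z.to_nat n))) by lia.
    now rewrite !Tz_of_nat.
  - replace n with (- Z.of_nat (S (Z.to_nat (- n - 1)))) by lia.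
    replace (- Z.of_nat (S (Z.to_nat (- n - 1))) + 1)
      with (- Z.of_nat (Z.to_nat (- n - 1))) by lia.
    rewrite !Tz_opp_of_nat. simpl. now rewrite (proj2 hbij).
Qed.

Lemma Tz_pred n x : Tz T Tinv (n - 1) x = Tinv (Tz T Tinv n x).
Proof.
  rewrite <- (proj1 hbij (Tz T Tinv (n - 1) x)), <- Tz_succ.
  now replace (n - 1 + 1) with n by lia.
Qed.

Lemma Tz_add a b x : Tz T Tinv (a + b) x = Tz T Tinv a (Tz T Tinv b x).
Proof.
  induction a as [|a IH|a IH] using Z.peano_ind.
  - reflexivity.
  - replace (Z.succ a + b) with (a + b + 1) by lia.
    unfold Z.succ. rewrite !Tz_succ. congruence.
  - replace (Z.pred a + b) with (a + b - 1) by lia.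
    replace (Z.pred a) with (a - 1) by lia.
    rewrite !Tz_pred. congruence.
Qed.

End Iterates.

Lemma iter_order_preserving {X : Type} (le : X -> X -> Prop) (f : X -> X) (k : nat) :
  order_preserving le f -> order_preserving le (Nat.iter k f).
Proof. intros hf. induction k; intros a b hab; simpl; auto. Qed.

Lemma iter_commute {X : Type} (f g : X -> X) (k : nat) x :
  (forall y, f (g y) = g (f y)) -> f (Nat.iter k g x) = Nat.iter k g (f x).
Proof. intros hfg. induction k; simpl; congruence. Qed.

Section Heights.
Context {X : Type} (H : Z -> X -> Prop).
Hypothesis H_antitone : forall p q x, q <= p -> H p x -> H q x.

Lemma height_ge_of_mem q y m : H q y -> height H y m -> q <= m.
Proof.
  intros hq [_ hm]. destruct (Z_le_gt_dec q m); [assumption|].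
  exfalso. apply hm, (H_antitone q); [lia|exact hq].
Qed.

Lemma height_lt_of_not_mem q y m : ~ H q y -> height H y m -> m < q.
Proof.
  intros hq [hm _]. destruct (Z_lt_ge_dec m q); [assumption|].
  exfalso. apply hq, (H_antitone m); [lia|exact hm].
Qed.

Lemma height_exists y p u : H p y -> ~ H u y -> exists m, height H y m.
Proof.
  intros hp hu.
  assert (walk : forall (k : nat) p, H p y -> ~ H (p + Z.of_nat k) y ->
                 exists m, height H y m).
  { induction k as [|k IH]; intros p' hp' hk.
    - exfalso. apply hk. now replace (p' + Z.of_nat 0) with p' by lia.
    - destruct (classic (H (p' + 1) y)) as [hs|hs].
      + apply (IH (p' + 1) hs).
        now replace (p' + 1 + Z.of_nat k) with (p' + Z.of_nat (S k)) by lia.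
      + now exists p'. }
  destruct (Z_lt_ge_dec p u) as [hpu|hup].
  - apply (walk (Z.to_nat (u - p)) p hp).
    now replace (p + Z.of_nat (Z.to_nat (u - p))) with u by lia.
  - exfalso. apply hu, (H_antitone p); [lia|exact hp].
Qed.

End Heights.

Definition halfspaces {X : Type} (le : X -> X -> Prop) (T Tinv : X -> X) (x0 : X)
  (n : Z) (x : X) : Prop := le (Tz T Tinv n x0) x.

Section HalfSpaces.
Context {X : Type} (le : X -> X -> Prop) (T Tinv : X -> X).
Hypotheses (le_refl : forall a, le a a)
  (le_antisym : forall a b, le a b -> le b a -> a = b)
  (le_trans : forall a b c, le a b -> le b c -> le a c).
Hypotheses (hbij : bij_with T Tinv) (hTp : order_preserving le T)
  (hcompl : complete_triple le T) (hdom : dominant le T).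
Variables (N : nat) (x0 : X).
Hypothesis hN : forall a b, exists k : nat, (k <= N)%nat /\
  (le a (Nat.iter k T b) \/ le b (Nat.iter k T a)).

Local Notation H := (halfspaces le T Tinv x0).
Local Notation C := (1 + 2 * Z.of_nat N).

Lemma le_iter (k : nat) y : le y (Nat.iter k T y).
Proof. induction k; simpl; eauto. Qed.

Lemma Tz_le_monotone i j y : i <= j -> le (Tz T Tinv i y) (Tz T Tinv j y).
Proof.
  intros hij. replace j with (Z.of_nat (Z.to_nat (j - i)) + i) by lia.
  rewrite Tz_add, Tz_of_nat by exact hbij. apply le_iter.
Qed.

Lemma Tz_order_preserving k : 0 <= k -> order_preserving le (Tz T Tinv k).
Proof.
  intros hk a b hab. replace k with (Z.of_nat (Z.to_nat k)) by lia.
  rewrite !Tz_of_nat. now apply iter_order_preserving.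
Qed.

(* Dominance at (z, z) yields z < T^n z, while T^n z <= T^(d n) z = z. *)
Lemma iter_not_periodic (d : nat) z : (0 < d)%nat -> Nat.iter d T z <> z.
Proof.
  intros hd ez.
  assert (eiter : forall m, Nat.iter (d * m) T z = z).
  { induction m as [|m IH]; [now rewrite Nat.mul_0_r|].
    rewrite Nat.mul_succ_r, Nat.add_comm, Nat.iter_add, IH. exact ez. }
  destruct (hdom z z) as [n [hle hneq]].
  apply hneq, le_antisym; [exact hle|].
  rewrite <- (eiter n) at 2.
  replace (d * n)%nat with ((d * n - n) + n)%nat by nia.
  rewrite Nat.iter_add. apply le_iter.
Qed.

Lemma Tz_le_reflect i j y : le (Tz T Tinv i y) (Tz T Tinv j y) -> i <= j.
Proof.
  intros hij. destruct (Z_le_gt_dec i j) as [|hgt]; [assumption|exfalso].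
  assert (e : Nat.iter (Z.to_nat (i - j)) T (Tz T Tinv j y) = Tz T Tinv i y).
  { rewrite <- (Tz_of_nat T Tinv), <- Tz_add by exact hbij. f_equal. lia. }
  apply (iter_not_periodic (Z.to_nat (i - j)) (Tz T Tinv j y)); [lia|].
  rewrite e. apply le_antisym; [exact hij|]. rewrite <- e. apply le_iter.
Qed.

Lemma halfspaces_antitone p q x : q <= p -> H p x -> H q x.
Proof. intros hqp hp. eapply le_trans; [apply Tz_le_monotone, hqp|exact hp]. Qed.

Lemma exists_not_mem_halfspaces y : exists u, ~ H u y.
Proof.
  destruct (hdom x0 y) as [n [hle hneq]]. exists (Z.of_nat n). intros hH.
  apply hneq, le_antisym; [exact hle|]. unfold halfspaces in hH.
  now rewrite Tz_of_nat in hH.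
Qed.

Lemma height_le_of_le_Tz q y m : le y (Tz T Tinv q x0) -> height H y m -> m <= q.
Proof. intros hq [hm _]. apply (Tz_le_reflect _ _ x0). eauto. Qed.

Lemma height_monotone u v mu mv :
  le u v -> height H u mu -> height H v mv -> mu <= mv.
Proof.
  intros huv hu hv. apply (height_ge_of_mem H halfspaces_antitone mu v); [|exact hv].
  eapply le_trans; [apply hu|exact huv].
Qed.

Lemma not_mem_halfspaces_le_Tz u y : ~ H u y -> le y (Tz T Tinv (u + 2 * Z.of_nat N) x0).
Proof.
  intros hu.
  destruct (hN (Tz T Tinv u x0) (Tz T Tinv (- Z.of_nat N) y)) as (k & hk & [h|h]);
    rewrite <- (Tz_of_nat T Tinv), <- Tz_add in h by exact hbij.
  - exfalso. apply hu. eapply le_trans; [exact h|].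
    replace y with (Tz T Tinv 0 y) at 2 by reflexivity. apply Tz_le_monotone. lia.
  - apply (Tz_order_preserving (Z.of_nat N)) in h; [|lia].
    rewrite <- !Tz_add in h by exact hbij.
    replace (Z.of_nat N + - Z.of_nat N) with 0 in h by lia.
    eapply le_trans; [exact h|]. apply Tz_le_monotone. lia.
Qed.

(* z := T^-N y satisfies x0 < T^n z for some n; the point T^(-N-n) x0 is then
   forced below y by quasi-totality. *)
Lemma exists_mem_halfspaces y : exists p, H p y.
Proof.
  set (z := Tz T Tinv (- Z.of_nat N) y).
  destruct (hdom z x0) as [n [hle hneq]].
  exists (- Z.of_nat N - Z.of_nat n).
  destruct (hN (Tz T Tinv (- Z.of_nat N - Z.of_nat n) x0) z) as (k & hk & [h|h]);
    rewrite <- (Tz_of_nat T Tinv) in h.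
  - unfold z in h. rewrite <- Tz_add in h by exact hbij.
    eapply le_trans; [exact h|].
    replace y with (Tz T Tinv 0 y) at 2 by reflexivity. apply Tz_le_monotone. lia.
  - exfalso. rewrite <- Tz_add in h by exact hbij.
    assert (hz : le z (Tz T Tinv (- Z.of_nat n) x0)).
    { eapply le_trans; [exact h|]. apply Tz_le_monotone. lia. }
    apply (Tz_order_preserving (Z.of_nat n)) in hz; [|lia].
    rewrite <- Tz_add, Tz_of_nat in hz by exact hbij.
    replace (Z.of_nat n + - Z.of_nat n) with 0 in hz by lia.
    apply hneq, le_antisym; [exact hle|exact hz].
Qed.

Lemma height_halfspaces_exists y : exists m, height H y m.
Proof.
  destruct (exists_mem_halfspaces y) as [p hp].
  destruct (exists_not_mem_halfspaces y) as [u hu].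
  exact (height_exists H halfspaces_antitone y p u hp hu).
Qed.

Lemma le_Tz_height y m : height H y m -> le y (Tz T Tinv (m + C) x0).
Proof.
  intros [_ hm]. apply not_mem_halfspaces_le_Tz in hm.
  now replace (m + C) with (m + 1 + 2 * Z.of_nat N) by lia.
Qed.

Lemma height_Tz_bounds_nonneg k y my m : 0 <= k ->
  height H y my -> height H (Tz T Tinv k y) m -> my + k <= m <= my + k + C.
Proof.
  intros hk hy hm. split.
  - apply (height_ge_of_mem H halfspaces_antitone _ (Tz T Tinv k y)); [|exact hm].
    unfold halfspaces. replace (my + k) with (k + my) by lia.
    rewrite Tz_add by exact hbij. apply Tz_order_preserving; [exact hk|apply hy].
  - apply (height_le_of_le_Tz _ (Tz T Tinv k y)); [|exact hm].
    replace (my + k + C) with (k + (my + C)) by lia.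
    rewrite Tz_add by exact hbij. apply Tz_order_preserving; [exact hk|].
    now apply le_Tz_height.
Qed.

Lemma height_Tz_bounds k y my m :
  height H y my -> height H (Tz T Tinv k y) m -> my + k - C <= m <= my + k + C.
Proof.
  intros hy hm. destruct (Z_le_gt_dec 0 k) as [hk|hk].
  - pose proof (height_Tz_bounds_nonneg k y my m hk hy hm). lia.
  - assert (e : Tz T Tinv (- k) (Tz T Tinv k y) = y).
    { rewrite <- Tz_add by exact hbij. now replace (- k + k) with 0 by lia. }
    rewrite <- e in hy.
    pose proof (height_Tz_bounds_nonneg (- k) _ _ _ ltac:(lia) hm hy). lia.
Qed.

Lemma half_space_order_halfspaces : half_space_order le H.
Proof.
  split; [split; [exact le_refl|split; assumption]|]. split.
  - split; [|split; [|split]].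
    + intros n x. apply halfspaces_antitone. lia.
    + intros n. exists (Tz T Tinv n x0). split; [apply le_refl|].
      intros h. apply Tz_le_reflect in h. lia.
    + intros x hall. destruct (exists_not_mem_halfspaces x) as [u hu]. exact (hu (hall u)).
    + exact exists_mem_halfspaces.
  - exists C. intros a b ma mb ha hb hw.
    eapply le_trans; [apply le_Tz_height, hb|].
    eapply le_trans; [|apply ha]. apply Tz_le_monotone. lia.
Qed.

Lemma halfspaces_ascend (n : nat) (y : nat -> X) p :
  (forall k, le (Nat.iter n T (y k)) (y (S k))) ->
  H p (y O) -> forall k, H (p + Z.of_nat n * Z.of_nat k) (y k).
Proof.
  intros hstep hp k. induction k as [|k IH].
  - now replace (p + Z.of_nat n * Z.of_nat 0) with p by lia.
  - unfold halfspaces in *. eapply le_trans; [|apply hstep].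
    rewrite <- (Tz_of_nat T Tinv).
    replace (p + Z.of_nat n * Z.of_nat (S k))
      with (Z.of_nat n + (p + Z.of_nat n * Z.of_nat k)) by lia.
    rewrite Tz_add by exact hbij. apply Tz_order_preserving; [lia|exact IH].
Qed.

Lemma halfspaces_descend (n : nat) (y : nat -> X) u :
  (forall k, le (Nat.iter n T (y (S k))) (y k)) ->
  ~ H u (y O) -> forall k, ~ H (u - Z.of_nat n * Z.of_nat k) (y k).
Proof.
  intros hstep hu k. induction k as [|k IH].
  - now replace (u - Z.of_nat n * Z.of_nat 0) with u by lia.
  - intros hk. apply IH. unfold halfspaces in *. eapply le_trans; [|apply hstep].
    rewrite <- (Tz_of_nat T Tinv).
    replace (u - Z.of_nat n * Z.of_nat k)
      with (Z.of_nat n + (u - Z.of_nat n * Z.of_nat (S k))) by lia.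
    rewrite Tz_add by exact hbij. apply Tz_order_preserving; [lia|exact hk].
Qed.

Section Action.
Context {G : Type} (mul : G -> G -> G) (one : G) (inv : G -> G) (act : G -> X -> X).
Hypotheses (hgroup : is_group mul one inv) (hact : is_action mul one act)
  (haut : action_by_automorphisms le T act).

Lemma act_Tz g k y : act g (Tz T Tinv k y) = Tz T Tinv k (act g y).
Proof.
  destruct (haut g) as [_ hgT].
  assert (hgTinv : forall w, act g (Tinv w) = Tinv (act g w)).
  { intros w. rewrite <- (proj1 hbij (act g (Tinv w))), <- hgT, (proj2 hbij).
    reflexivity. }
  induction k as [|k IH|k IH] using Z.peano_ind.
  - reflexivity.
  - unfold Z.succ. rewrite !Tz_succ by exact hbij. congruence.
  - replace (Z.pred k) with (k - 1) by lia. rewrite !Tz_pred by exact hbij. congruence.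
Qed.

Lemma act_iter_mul g (k : nat) x : act (Nat.iter k (mul g) one) x = Nat.iter k (act g) x.
Proof.
  induction k as [|k IH]; simpl; [apply hact|]. now rewrite (proj2 hact), IH.
Qed.

Lemma le_iter_act g (n k : nat) a b :
  le (Nat.iter n T a) b -> le (Nat.iter n T (Nat.iter k (act g) a)) (Nat.iter k (act g) b).
Proof.
  intros hab. destruct (haut g) as [hgp hgT].
  rewrite (iter_commute (Nat.iter n T) (act g)).
  - now apply iter_order_preserving.
  - intros w. symmetry. now apply iter_commute.
Qed.

Lemma unbounded_action_halfspaces :
  dominating_action le T act -> unbounded_action mul one inv H act.
Proof.
  intros (g & x & n & hn & hgx).
  destruct (exists_mem_halfspaces x) as [p hp].
  destruct (exists_not_mem_halfspaces x) as [u hu].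
  exists g, x. split.
  - assert (hasc := halfspaces_ascend n (fun k => Nat.iter k (act g) x) p).
    intros M. exists (Z.max 1 (M - p)). intros k m hk hm.
    destruct k as [|q|q]; try lia. cbn [gpow] in hm. rewrite act_iter_mul in hm.
    assert (hmem : H (p + Z.of_nat n * Z.pos q) (Nat.iter (Pos.to_nat q) (act g) x)).
    { rewrite <- positive_nat_Z. apply hasc; [|exact hp].
      intros k. rewrite Nat.iter_succ_r. now apply le_iter_act. }
    pose proof (height_ge_of_mem H halfspaces_antitone _ _ _ hmem hm). nia.
  - set (h := inv g).
    assert (hbase : le (Nat.iter n T (act h x)) x).
    { destruct (haut h) as [hhp hhT].
      rewrite <- iter_commute by exact hhT.
      replace x with (act h (act g x)) at 2.
      + now apply hhp.
      + destruct hgroup as (_ & _ & _ & hinv_l & _).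
        rewrite <- (proj2 hact). unfold h. rewrite hinv_l. apply hact. }
    assert (hdesc := halfspaces_descend n (fun k => Nat.iter k (act h) x) u).
    intros M. exists (Z.min (-1) (M - u)). intros k m hk hm.
    destruct k as [|q|q]; try lia. cbn [gpow] in hm. rewrite act_iter_mul in hm.
    assert (hout : ~ H (u - Z.of_nat n * Z.pos q) (Nat.iter (Pos.to_nat q) (act h) x)).
    { rewrite <- positive_nat_Z. apply hdesc; [|exact hu].
      intros k. rewrite Nat.iter_succ_r. now apply le_iter_act. }
    pose proof (height_lt_of_not_mem H halfspaces_antitone _ _ _ hout hm).
    assert (Z.neg q = - Z.pos q) by reflexivity. nia.
Qed.

(* g maps T^ma x0 <= a <= T^(ma + C) x0 to T^ma (g x0) <= g a <= T^(ma + C) (g x0). *)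
Lemma height_act_bounds g a ma mga hz :
  height H (act g x0) hz -> height H a ma -> height H (act g a) mga ->
  ma + hz - C <= mga <= ma + hz + 2 * C.
Proof.
  intros hhz ha hga. destruct (haut g) as [hgp _]. split.
  - destruct (height_halfspaces_exists (Tz T Tinv ma (act g x0))) as [m hm].
    pose proof (height_Tz_bounds _ _ _ _ hhz hm).
    enough (m <= mga) by lia.
    apply (height_monotone (act g (Tz T Tinv ma x0)) (act g a)).
    + apply hgp, ha.
    + now rewrite act_Tz.
    + exact hga.
  - destruct (height_halfspaces_exists (Tz T Tinv (ma + C) (act g x0))) as [m hm].
    pose proof (height_Tz_bounds _ _ _ _ hhz hm).
    enough (mga <= m) by lia.
    apply (height_monotone (act g a) (act g (Tz T Tinv (ma + C) x0))).
    + apply hgp, le_Tz_height, ha.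
    + exact hga.
    + now rewrite act_Tz.
Qed.

Lemma quasi_automorphism_halfspaces : quasi_automorphism_action H act.
Proof.
  exists (3 * C). intros g a b ma mb mga mgb ha hb hga hgb.
  destruct (height_halfspaces_exists (act g x0)) as [hz hhz].
  pose proof (height_act_bounds g a ma mga hz hhz ha hga).
  pose proof (height_act_bounds g b mb mgb hz hhz hb hgb).
  apply Z.abs_le. lia.
Qed.

End Action.

End HalfSpaces.

Theorem proposition1p6 (X : Type) (le : X -> X -> Prop) (T Tinv : X -> X)
  (hqt : quasi_total_triple le T Tinv) (hc : complete_triple le T) (x0 : X) :
  let H := fun (n : Z) (x : X) => le (Tz T Tinv n x0) x in
  half_space_order le H /\
  (forall (G : Type) (mul : G -> G -> G) (one : G) (inv : G -> G)
          (act : G -> X -> X),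
     is_group mul one inv -> is_action mul one act ->
     action_by_automorphisms le T act -> dominating_action le T act ->
     effective_action one act ->
     unbounded_action mul one inv H act /\
     quasi_automorphism_action H act /\
     quasi_total_order mul one inv (induced_order mul le act)).
Proof.
  intros H.
  destruct hqt as (hpo & hbij & hTp & hdom & N & hN).
  destruct hpo as (hrefl & hanti & htrans).
  assert (hso : half_space_order le H)
    by (eapply half_space_order_halfspaces; eassumption).
  split; [exact hso|].
  intros G mul one inv act hgroup hact haut hdomg heff.
  assert (hunb : unbounded_action mul one inv H act)
    by (eapply unbounded_action_halfspaces; eassumption).
  assert (hqa : quasi_automorphism_action H act)
    by (eapply quasi_automorphism_halfspaces; eassumption).
  split; [exact hunb|split; [exact hqa|]].
  exists X, le, H, act.
  split; [exact hso|split; [exact hact|split; [exact heff|]]].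
  split; [exact hunb|split; [exact hqa|]].
  intros g h. reflexivity.
Qed.
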